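(* Fix a positive integer $k$. Consider either of the following two cases. (Squared case) Fix $m$ tuples $(\beta_i,\gamma_i,\delta_i)$ of positive reals and let $B_i=1+\beta_i+\frac1{\gamma_i}$, $C_i=1+\gamma_i+\frac1{\delta_i}$, $D_i=1+\delta_i+\frac1{\beta_i}$ ($1\le i\le m$). Let $P_{\mathrm{low}}$ be the linear program: maximize $\sum_{j=1}^k\alpha_j$ subject to $f+\sum_{j=1}^k d_j\le1$; $\alpha_j\le\alpha_{j+1}$ ($1\le j<k$); $\alpha_j\le B_i\alpha_l+C_id_j+D_id_l$ ($1\le j,l\le k$, $1\le i\le m$); $x_{jl}\ge\alpha_j-d_l$ ($1\le j\le l\le k$); $\sum_{l=j}^k x_{jl}\le f$ ($1\le j\le k$); $\alpha_j,d_j,f,x_{jl}\ge0$. (Metric case) Let $P_{\mathrm{low}}$ be the same program with the constraints $\alpha_j\le B_i\alpha_l+C_id_j+D_id_l$ replaced by $\alpha_j\le\alpha_l+d_j+d_l$ ($1\le j,l\le k$). In either case let $P_{\mathrm{up}}$ be the program obtained from $P_{\mathrm{low}}$ by imposing $x_{jl}\ge\alpha_j-d_l$ only for $1\le j<l\le k$ (the variables $x_{jj}$ remain in $\sum_{l=j}^kx_{jl}\le f$ and are only required to be non-negative). Let $z_k$ be the optimal value of $P_{\mathrm{low}}$, and let $(\boldsymbol\alpha,\mathbf d,\mathbf x,f)$ be an optimal solution of $P_{\mathrm{up}}$, with value $x_k$. If $\varepsilon=\max_j\{\alpha_j-d_j\}$, then $z_k\ge\frac{1}{1+\varepsilon}x_k$.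 *)

From mathcomp Require Import all_boot all_order all_algebra.
Set Implicit Arguments. Unset Strict Implicit. Unset Printing Implicit Defensive.
Import Order.TTheory GRing.Theory Num.Theory.
Local Open Scope ring_scope.

(* Indices 1..k of the paper are represented by 'I_k (0-based). *)

Inductive lp_case (R : realFieldType) : Type :=
  | Metric
  | Squared (m : nat) (beta gamma delta : 'I_m -> R).

Arguments Metric {R}.

Definition case_ok (R : realFieldType) (c : lp_case R) : Prop :=
  match c with
  | Metric => True
  | Squared m be ga de => forall i : 'I_m, 0 < be i /\ 0 < ga i /\ 0 < de i
  end.

Definition tri_constr (R : realFieldType) (k : nat) (c : lp_case R)
    (alpha d : 'I_k -> R) : Prop :=
  match c with
  | Metric => forall j l : 'I_k, alpha j <= alpha l + d j + d l
  | Squared m be ga de =>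
      forall (j l : 'I_k) (i : 'I_m),
        let B := 1 + be i + (ga i)^-1 in
        let C := 1 + ga i + (de i)^-1 in
        let D := 1 + de i + (be i)^-1 in
        alpha j <= B * alpha l + C * d j + D * d l
  end.

(* Feasibility for P_low (up = false) and P_up (up = true).  In P_low the
   constraint x_{jl} >= alpha_j - d_l is imposed for j <= l, in P_up only for
   j < l. *)
Definition lp_feasible (R : realFieldType) (k : nat) (c : lp_case R) (up : bool)
    (alpha d : 'I_k -> R) (x : 'I_k -> 'I_k -> R) (f : R) : Prop :=
  [/\ f + \sum_(j < k) d j <= 1,
      (forall j l : 'I_k, val l = (val j).+1 -> alpha j <= alpha l) /\
      tri_constr c alpha d,
      (forall j l : 'I_k, (if up then (j < l)%N else (j <= l)%N) ->
                          alpha j - d l <= x j l),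
      (forall j : 'I_k, \sum_(l < k | (j <= l)%N) x j l <= f) &
      [/\ (forall j, 0 <= alpha j), (forall j, 0 <= d j), 0 <= f &
          (forall j l, 0 <= x j l)]].

Definition lp_obj (R : realFieldType) (k : nat) (alpha : 'I_k -> R) : R :=
  \sum_(j < k) alpha j.

Definition lp_opt_value (R : realFieldType) (k : nat) (c : lp_case R)
    (up : bool) (z : R) : Prop :=
  (exists (alpha d : 'I_k -> R) x f, lp_feasible c up alpha d x f /\ lp_obj alpha = z) /\
  (forall (alpha d : 'I_k -> R) x f, lp_feasible c up alpha d x f -> lp_obj alpha <= z).

Definition lp_opt_solution (R : realFieldType) (k : nat) (c : lp_case R)
    (up : bool) (alpha d : 'I_k -> R) (x : 'I_k -> 'I_k -> R) (f : R) : Prop :=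
  lp_feasible c up alpha d x f /\
  (forall (alpha' d' : 'I_k -> R) x' f', lp_feasible c up alpha' d' x' f' ->
     lp_obj alpha' <= lp_obj alpha).

(* An optimal solution of P_up may violate the P_low constraint x_jj >= alpha_j - d_j
   by at most eps.  Adding eps to every x_jj and to f repairs it and keeps
   sum_l x_jl <= f; the budget constraint becomes f + sum d <= 1 + eps, so
   dividing everything by 1 + eps gives a solution of P_low of value
   x_k / (1 + eps).  The division needs eps >= 0, which holds because at the
   last index alpha_k >= d_k: otherwise raising alpha_k to d_k keeps P_up
   feasible (all its constraints on alpha_k are either monotonicity towards the
   top or triangle constraints, where d_k majorizes) and increases the value. *)
From mathcomp Require Import all_boot all_order all_algebra.
From mathcomp Require Import lra zify.
Set Implicit Arguments. Unset Strict Implicit. Unset Printing Implicit Defensive.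
Import Order.TTheory GRing.Theory Num.Theory.
Local Open Scope ring_scope.

Lemma tri_constr_scale (R : realFieldType) (k : nat) (c : lp_case R)
    (alpha d : 'I_k -> R) (s : R) :
  0 <= s -> tri_constr c alpha d ->
  tri_constr c (fun j => alpha j * s) (fun j => d j * s).
Proof.
move=> s0; case: c => [|m be ga de] /= htri.
  by move=> j l; have := ler_wpM2r s0 (htri j l); rewrite !mulrDl.
move=> j l i /=; have := ler_wpM2r s0 (htri j l i).
by rewrite /= !mulrDl !mulrA.
Qed.

Lemma tri_constr_raise (R : realFieldType) (k : nat) (c : lp_case R)
    (alpha alpha2 d : 'I_k -> R) :
  case_ok c -> (forall j, 0 <= alpha2 j) -> (forall j, 0 <= d j) ->
  (forall j, alpha j <= alpha2 j) ->
  (forall j, alpha2 j = alpha j \/ alpha2 j = d j) ->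
  tri_constr c alpha d -> tri_constr c alpha2 d.
Proof.
case: c => [|m be ga de] /= hc a20 d0 le_a2 a2E htri.
  move=> j l; case: (a2E j) => ->.
    by apply: le_trans (htri j l) _; rewrite !lerD2r.
  have := a20 l; have := d0 l; have := d0 j; lra.
move=> j l i /=; have [hb [hg hd]] := hc i.
have B_gt0 : 0 < 1 + be i + (ga i)^-1 by rewrite addr_gt0 ?invr_gt0 // addr_gt0.
have D_gt0 : 0 < 1 + de i + (be i)^-1 by rewrite addr_gt0 ?invr_gt0 // addr_gt0.
have C_ge1 : 1 <= 1 + ga i + (de i)^-1.
  by rewrite -addrA lerDl addr_ge0 // ?invr_ge0 ltW.
case: (a2E j) => ->.
  by apply: le_trans (htri j l i) _; rewrite /= !lerD2r ler_pM2l.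
have := mulr_ge0 (ltW B_gt0) (a20 l); have := mulr_ge0 (ltW D_gt0) (d0 l).
have : d j <= (1 + ga i + (de i)^-1) * d j by rewrite ler_peMl.
lra.
Qed.

Section RaiseLast.

Variables (R : realFieldType) (k : nat) (c : lp_case R).
Variables (alpha d : 'I_k -> R) (x : 'I_k -> 'I_k -> R) (f : R) (top : 'I_k).
Hypothesis top_last : top.+1 = k.

Definition alpha_raised (j : 'I_k) : R := if j == top then d top else alpha j.

Lemma lp_feasible_up_raise_last :
  case_ok c -> alpha top <= d top ->
  lp_feasible c true alpha d x f -> lp_feasible c true alpha_raised d x f.
Proof.
move=> hc le_top [hsum [hmon htri] hx hxs [a0 d0 f0 x0]].
have le_raised j : alpha j <= alpha_raised j.
  by rewrite /alpha_raised; case: eqP => [->|].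
have raised_ge0 j : 0 <= alpha_raised j.
  by rewrite /alpha_raised; case: eqP.
have raisedE (j l : 'I_k) : (j < l)%N -> alpha_raised j = alpha j.
  rewrite /alpha_raised; case: eqP => // -> top_l.
  by exfalso; have := ltn_ord l; lia.
split=> //.
- split=> [j l hjl|].
    by rewrite (raisedE j l) ?hjl //; apply: le_trans (hmon j l hjl) (le_raised l).
  apply: tri_constr_raise => // j.
  by rewrite /alpha_raised; case: eqP => [->|]; [right|left].
- by move=> j l hjl; rewrite (raisedE _ _ hjl); apply: hx.
Qed.

Lemma lp_opt_up_d_last_le :
  case_ok c -> lp_opt_solution c true alpha d x f -> d top <= alpha top.
Proof.
move=> hc [hfeas hmax]; rewrite leNgt; apply/negP => lt_top.
have := hmax _ _ _ _ (lp_feasible_up_raise_last hc (ltW lt_top) hfeas).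
rewrite /lp_obj (bigD1 top) //= [X in _ <= X](bigD1 top) //= /alpha_raised (eqxx top).
rewrite (eq_bigr alpha) => [|j /negbTE -> //].
by move: lt_top; set S := \sum_(j < k | _) _; lra.
Qed.

End RaiseLast.

Lemma lp_feasible_up_scale_low (R : realFieldType) (k : nat) (c : lp_case R)
    (alpha d : 'I_k -> R) (x : 'I_k -> 'I_k -> R) (f eps : R) :
  0 <= eps -> (forall j, alpha j - d j <= eps) ->
  lp_feasible c true alpha d x f ->
  let s := (1 + eps)^-1 in
  lp_feasible c false (fun j => alpha j * s) (fun j => d j * s)
    (fun j l => (x j l + (if j == l then eps else 0)) * s) ((f + eps) * s).
Proof.
move=> eps0 heps [hsum [hmon htri] hx hxs [a0 d0 f0 x0]] s.
have s_gt0 : 0 < s by rewrite invr_gt0; lra.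
split.
- rewrite -mulr_suml -mulrDl -(mulfV (_ : 1 + eps != 0)); last by rewrite gt_eqF //; lra.
  by rewrite ler_pM2r //; lra.
- split; last exact: tri_constr_scale (ltW s_gt0) htri.
  by move=> j l hjl; rewrite ler_pM2r ?hmon.
- move=> j l /=; rewrite -mulrBl ler_pM2r // leq_eqVlt => /orP[/eqP/val_inj ->|hjl].
    by rewrite eqxx; have := heps l; have := x0 l l; lra.
  by rewrite ifF ?addr0 ?hx //; apply/eqP => jl; rewrite jl ltnn in hjl.
- move=> j; rewrite -mulr_suml ler_pM2r // big_split /=.
  have -> : \sum_(l < k | (j <= l)%N) (if j == l then eps else 0) = eps.
    rewrite (bigD1 j) //= eqxx big1 ?addr0 // => l /andP[_ /negbTE].
    by rewrite eq_sym => ->.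
  by have := hxs j; lra.
- split=> [j|j||j l]; apply: mulr_ge0 (ltW s_gt0) => //.
  + exact: addr_ge0.
  + by apply: addr_ge0 => //; case: eqP.
Qed.

Theorem lemma9 (R : realFieldType) (k : nat) (hk : (0 < k)%N)
    (c : lp_case R) (hc : case_ok c)
    (zk : R) (hz : lp_opt_value k c false zk)
    (alpha d : 'I_k -> R) (x : 'I_k -> 'I_k -> R) (f : R)
    (hopt : lp_opt_solution c true alpha d x f)
    (xk : R) (hxk : xk = lp_obj alpha)
    (eps : R)
    (heps : (exists j : 'I_k, eps = alpha j - d j) /\
            (forall j : 'I_k, alpha j - d j <= eps)) :
  xk / (1 + eps) <= zk.
Proof.
have top_lt : (k.-1 < k)%N by rewrite prednK.
have eps0 : 0 <= eps.
  apply: le_trans (heps.2 (Ordinal top_lt)); rewrite subr_ge0.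
  by apply: lp_opt_up_d_last_le hopt => //=; rewrite prednK.
have := hz.2 _ _ _ _ (lp_feasible_up_scale_low eps0 heps.2 hopt.1).
by rewrite hxk /lp_obj -mulr_suml.
Qed.
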